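(* In any run $R$ of algorithm $\mathcal{A}_{\mathrm{reg}}$, for all $op, op' \in C(R)$: if $op \rightarrow op'$ then $op \prec op'$.
   Context: $op \rightarrow op'$ means the response event of $op$ occurs before the invocation event of $op'$ in the history of $R$. System model: $n$ asynchronous, crash-prone processes with identities in $\{1,\ldots,n\}$. Each process $k$ is the unique writer of a reliable linearizable single-writer multi-reader Distributed Ledger Object (DLO) $L_k$, readable by all processes; its state is a finite sequence of records, initially empty, with operations $L_k.get()$ (returns the current sequence) and $L_k.append(r)$ (appends record $r$); every invocation by a correct process completes. Well-formedness: a process does not invoke $\mathrm{apply}$ before its previous invocation has finished. Validated object: given a predicate $\mathrm{valid}(\langle P,\prec\rangle, op, i)$ and a function $\mathrm{execute}(\langle P,\prec\rangle, op, i)$, whose first argument is a strictly partially ordered set of operations, $op$ an operation and $i$ its issuing process. Clients use $\mathrm{apply}(op,i)$, returning $(\mathit{ACK}, r)$ if $op$ is found valid and executed with result $r$, and $(\mathit{NACK},-)$ otherwise. The history of a run $R$ contains only operations for which $\mathrm{apply}$ returns $\mathit{ACK}$; $C(R)$ is the set of complete such operations. Algorithm $\mathcal{A}_{\mathrm{reg}}$ (code of $\mathrm{apply}(op,i)$ at process $i$): for $j=1,\ldots,n$ in order, set $G_j \leftarrow L_j.get()$, $T_j \leftarrow |G_j|$; set $ts \leftarrow (i,T_1,\ldots,T_n)$; set $P \leftarrow \{op' : \langle ts',op'\rangle \in \bigcup_j G_j\}$; if $\mathrm{valid}(\langle P,\prec\rangle, op, i)$ then $res \leftarrow \mathrm{execute}(\langle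 P,\prec\rangle, op,i)$, $L_i.append(\langle ts, op\rangle)$, return $(\mathit{ACK},res)$; otherwise return $(\mathit{NACK},-)$. The invocation event of a valid operation is the invocation of $L_1.get()$, its response event the completion of $L_i.append(\langle ts,op\rangle)$. $ts$ is the timestamp $ts(op)$. Order $\prec$: for $op,op' \in C(R)$ with $ts(op)=(i,T_1,\ldots,T_n)$, $ts(op')=(k,T'_1,\ldots,T'_n)$, $op \prec op'$ iff $T_i < T'_i$. *)

From mathcomp Require Import all_boot.
Set Implicit Arguments.
Unset Strict Implicit.
Unset Printing Implicit Defensive.

(* Processes are 'I_n (paper's process k+1 is ordinal k); ledger L_{k+1} is
   indexed by the natural number k.  A timestamp (i, T_1..T_n) is a pair of
   the issuing process and the sequence [T_1; ...; T_n]. *)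
Definition tstamp (n : nat) := ('I_n * seq nat)%type.
Definition record (n : nat) (Op : Type) := (tstamp n * Op)%type.

(* Each DLO operation is split into invocation,
   linearization point, and response (linearizable objects).  Purely local
   computation is folded into the adjacent event of the same process:
   - Invoke i op : invocation of apply(op,i), i.e. invocation of L_1.get();
   - LinGet i    : linearization point of i's pending get();
   - RespGet i   : response of i's pending get() on L_j; then i either invokes
                   L_{j+1}.get(), or (j = n) computes ts, P, valid, and either
                   computes execute and invokes L_i.append(<ts,op>), or
                   returns (NACK,-);
   - LinApp i    : linearization point of i's pending append;
   - RespApp i   : response of L_i.append, i.e. apply returns (ACK,res). *)
Inductive label (n : nat) (Op : Type) :=
| Invoke of 'I_n & Op
| LinGet of 'I_n
| RespGet of 'I_n
| LinApp of 'I_n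
| RespApp of 'I_n.

Inductive pstate (n : nat) (Op Res : Type) :=
| Idle
  (* reading: op, results G_1..G_{j-1} collected so far, pending get on L_j:
     None = not yet linearized, Some g = linearized with return value g *)
| Reading of Op & seq (seq (record n Op)) & option (seq (record n Op))
  (* appending <ts,op>, result res, flag: append already linearized *)
| Appending of Op & tstamp n & Res & bool.

Record config (n : nat) (Op Res : Type) := Config {
  ledgers : nat -> seq (record n Op);
  procs : 'I_n -> pstate n Op Res }.

Definition init_config (n : nat) (Op Res : Type) : config n Op Res :=
  Config (fun _ => [::]) (fun _ => Idle n Op Res).

Definition set_proc (n : nat) (Op Res : Type) (c : config n Op Res)
  (i : 'I_n) (s : pstate n Op Res) : config n Op Res :=
  Config (ledgers c) (fun j => if j == i then s else procs c j).

(* One step of the system.  [valid] and [execute] receive the collected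
   sequences G_1..G_n (from which P and the order on it are determined),
   the operation and the issuing process. *)
Definition step (n : nat) (Op Res : Type)
  (valid : seq (seq (record n Op)) -> Op -> 'I_n -> bool)
  (execute : seq (seq (record n Op)) -> Op -> 'I_n -> Res)
  (c : config n Op Res) (l : label n Op) : option (config n Op Res) :=
  match l with
  | Invoke i op =>
      if procs c i is Idle then Some (set_proc c i (Reading Res op [::] None))
      else None
  | LinGet i =>
      if procs c i is Reading op G None then
        Some (set_proc c i (Reading Res op G (Some (ledgers c (size G)))))
      else None
  | RespGet i =>
      if procs c i is Reading op G (Some g) then
        let G' := rcons G g in
        if size G' < n then Some (set_proc c i (Reading Res op G' None))
        else if valid G' op i then
          Some (set_proc c i (Appending op (i, map size G') (execute G' op i) false))
        else Some (set_proc c i (Idle n Op Res))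
      else None
  | LinApp i =>
      if procs c i is Appending op ts r false then
        Some (Config (fun x => if x == val i then rcons (ledgers c x) (ts, op)
                               else ledgers c x)
                     (fun j => if j == i then Appending op ts r true
                               else procs c j))
      else None
  | RespApp i =>
      if procs c i is Appending op ts r true then
        Some (set_proc c i (Idle n Op Res))
      else None
  end.

Fixpoint exec (n : nat) (Op Res : Type)
  (valid : seq (seq (record n Op)) -> Op -> 'I_n -> bool)
  (execute : seq (seq (record n Op)) -> Op -> 'I_n -> Res)
  (c : config n Op Res) (ls : seq (label n Op)) : option (config n Op Res) :=
  match ls with
  | [::] => Some c
  | l :: ls' =>
      match step valid execute c l with
      | Some c' => exec valid execute c' ls'
      | None => None
      end
  end.

(* A (finite prefix of a) run: a schedule of events, each enabled.  Crashes
   are modelled by a process simply taking no further steps; asynchrony by an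
   arbitrary interleaving. *)
Definition is_run (n : nat) (Op Res : Type)
  (valid : seq (seq (record n Op)) -> Op -> 'I_n -> bool)
  (execute : seq (seq (record n Op)) -> Op -> 'I_n -> Res)
  (ls : seq (label n Op)) : Prop :=
  exists c, exec valid execute (init_config n Op Res) ls = Some c.

Definition acked (n : nat) (Op : Type) (ls : seq (label n Op))
  (i : 'I_n) (t t' : nat) : Prop :=
  [/\ t < t',
      exists op, onth ls t = Some (Invoke i op),
      onth ls t' = Some (@RespApp n Op i)
    & forall u op, t < u < t' -> onth ls u <> Some (Invoke i op)].

(* The timestamp ts of the operation of process i whose response is at time
   t' (the value of the local variable ts just before that event). *)
Definition ts_at (n : nat) (Op Res : Type)
  (valid : seq (seq (record n Op)) -> Op -> 'I_n -> bool)
  (execute : seq (seq (record n Op)) -> Op -> 'I_n -> Res)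
  (ls : seq (label n Op)) (i : 'I_n) (t' : nat) : option (tstamp n) :=
  match exec valid execute (init_config n Op Res) (take t' ls) with
  | Some c => if procs c i is Appending _ ts _ _ then Some ts else None
  | None => None
  end.

(* op ≺ op' with ts(op) = (i,T), ts(op') = (k,T'): T_i < T'_i. *)
Definition ts_prec (n : nat) (ts ts' : tstamp n) : Prop :=
  nth 0 ts.2 ts.1 < nth 0 ts'.2 ts.1.

(* Let c1 be the configuration at the response of op and c2 the one at the
   invocation of op'.  The entry T_i of ts(op) is the length of L_i read by i
   before it appended op to L_i itself, so T_i < |L_i| in c1 <= |L_i| in c2,
   ledgers only growing.  Process k reads every ledger after c2, so each entry
   of ts(op') is at least the length of the corresponding ledger in c2. *)
From mathcomp Require Import all_boot.
Set Implicit Arguments.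
Unset Strict Implicit.
Unset Printing Implicit Defensive.

Section Run.

Variables (n : nat) (Op Res : Type).
Variable valid : seq (seq (record n Op)) -> Op -> 'I_n -> bool.
Variable execute : seq (seq (record n Op)) -> Op -> 'I_n -> Res.

Local Notation config := (config n Op Res).
Local Notation pstate := (pstate n Op Res).
Local Notation step := (step valid execute).
Local Notation exec := (exec valid execute).

Definition reaches (c c' : config) : Prop := exists s, exec c s = Some c'.

Lemma exec_cat (c : config) s1 s2 :
  exec c (s1 ++ s2) = if exec c s1 is Some c1 then exec c1 s2 else None.
Proof. by elim: s1 c => [|l s IH] c //=; case: (step c l). Qed.

Lemma reaches_ind (P : config -> Prop) :
  (forall c l c', step c l = Some c' -> P c -> P c') ->
  forall c c', reaches c c' -> P c -> P c'.
Proof.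
move=> stepP c c' [s]; elim: s c => [|l s IH] c /=; first by case=> ->.
by case E: (step c l) => [c1|] // /IH Hc1 /(stepP _ _ _ E).
Qed.

Definition label_proc (l : label n Op) : 'I_n :=
  match l with Invoke i _ | LinGet i | RespGet i | LinApp i | RespApp i => i end.

Lemma step_procs_other c l c' j :
  step c l = Some c' -> j != label_proc l -> procs c' j = procs c j.
Proof.
case: l => [i o0|i|i|i|i] /=; case: (procs c i) => [|o G [g|]|o ts r [|]] //=;
  repeat case: ifP => _; by case=> <- /= /negbTE ->.
Qed.

Lemma step_ledger_size c l c' x :
  step c l = Some c' -> size (ledgers c x) <= size (ledgers c' x).
Proof.
case: l => [i o0|i|i|i|i] /=; case: (procs c i) => [|o G [g|]|o ts r [|]] //=;
  repeat case: ifP => _; case=> <- //=.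
by case: ifP => // _; rewrite size_rcons.
Qed.

Lemma reaches_ledger_size c c' x :
  reaches c c' -> size (ledgers c x) <= size (ledgers c' x).
Proof.
move=> reach; apply: (reaches_ind (P := fun c' => _ <= size (ledgers c' x))) reach _ => //.
by move=> c1 l c2 /(step_ledger_size x) le12 le01; exact: leq_trans le12.
Qed.

Definition ledger_sizes (c : config) (x : nat) : nat := size (ledgers c x).

Definition sizes_rel (R : rel nat) (L : nat -> nat) (G : seq (seq (record n Op))) :=
  forall x, x < size G -> R (nth 0 (map size G) x) (L x).

Lemma sizes_rel_rcons R L G g :
  sizes_rel R L G -> R (size g) (L (size G)) -> sizes_rel R L (rcons G g).
Proof.
move=> HG Hg x; rewrite size_rcons ltnS leq_eqVlt map_rcons nth_rcons size_map.
by case/orP=> [/eqP->|lt_x]; [rewrite ltnn eqxx | rewrite lt_x; apply: HG].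
Qed.

(* Once j's append is linearized (b = true), L_j has grown past T_j. *)
Definition state_below (L : nat -> nat) (j : 'I_n) (s : pstate) : Prop :=
  match s with
  | Idle => True
  | Reading _ G g => sizes_rel leq L G /\ forall g', g = Some g' -> size g' <= L (size G)
  | Appending _ ts _ b => ts.1 = j /\ nth 0 ts.2 j + b <= L j
  end.

Lemma state_below_mono L L' j s :
  (forall x, L x <= L' x) -> state_below L j s -> state_below L' j s.
Proof.
move=> le_L; case: s => [|o G g|o ts r b] //=.
- case=> HG Hg; split=> [x /HG|g' /Hg] H; exact: leq_trans H (le_L _).
- by case=> -> H; split=> //; apply: leq_trans H (le_L _).
Qed.

Definition timestamps_below (c : config) : Prop :=
  forall j, state_below (ledger_sizes c) j (procs c j).

Lemma timestamps_below_step c l c' :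
  step c l = Some c' -> timestamps_below c -> timestamps_below c'.
Proof.
move=> st inv j; have [->|ne] := eqVneq j (label_proc l); last first.
  rewrite (step_procs_other st ne); apply: state_below_mono (inv j) => x.
  exact: step_ledger_size st.
have := inv (label_proc l); move: st; rewrite /ledger_sizes.
case: l => [i o0|i|i|i|i] /=; case: (procs c i) => [|o G [g|]|o ts r [|]] //=.
- by case=> <- /=; rewrite eqxx.
- by case=> <- /=; rewrite eqxx => -[HG _]; split=> // g' [<-].
- move=> + [HG Hg]; case: ifP => [_ | /negbT].
    by case=> <- /=; rewrite eqxx; split=> //; apply: sizes_rel_rcons => //; apply: Hg.
  rewrite -leqNgt size_rcons => le_n; case: ifP => _ [<-] /=; rewrite eqxx //.
  split=> //; rewrite addn0.
  by apply: (sizes_rel_rcons HG (Hg _ erefl)); rewrite size_rcons (leq_trans _ le_n).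
- case=> <- /= [ts_i lt_ts]; rewrite eqxx; split=> //=.
  by rewrite eqxx size_rcons addn1 ltnS -(addn0 (nth _ _ _)).
- by case=> <- /=; rewrite eqxx.
Qed.

Definition state_above (L0 : nat -> nat) (s : pstate) : Prop :=
  match s with
  | Idle => True
  | Reading _ G g => sizes_rel geq L0 G /\ forall g', g = Some g' -> L0 (size G) <= size g'
  | Appending _ ts _ _ => forall x, x < n -> L0 x <= nth 0 ts.2 x
  end.

Definition dominates (L0 : nat -> nat) (k : 'I_n) (c : config) : Prop :=
  (forall x, L0 x <= ledger_sizes c x) /\ state_above L0 (procs c k).

Lemma dominates_step L0 k c l c' :
  step c l = Some c' -> dominates L0 k c -> dominates L0 k c'.
Proof.
move=> st [le_L0 inv]; split=> [x|]; first exact: leq_trans (le_L0 x) (step_ledger_size x st).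
have [eq_k|ne] := eqVneq k (label_proc l); last by rewrite (step_procs_other st ne).
subst k; move: inv st; case: l => [i o0|i|i|i|i] /=; case: (procs c i) => [|o G [g|]|o ts r [|]] //=.
- by move=> _ [<-] /=; rewrite eqxx.
- by move=> [HG _] [<-] /=; rewrite eqxx; split=> // g' [<-]; apply: le_L0.
- move=> [HG Hg]; case: ifP => [_ | /negbT].
    by case=> <- /=; rewrite eqxx; split=> //; apply: sizes_rel_rcons => //; apply: Hg.
  rewrite -leqNgt size_rcons => le_n; case: ifP => _ [<-] /=; rewrite eqxx // => x lt_x.
  by apply: (sizes_rel_rcons HG (Hg _ erefl)); rewrite size_rcons (leq_trans lt_x).
- by move=> ? [<-] /=; rewrite eqxx.
- by move=> _ [<-] /=; rewrite eqxx.
Qed.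

Lemma reachable_timestamps_below c :
  reaches (init_config n Op Res) c -> timestamps_below c.
Proof. by move/(reaches_ind (@timestamps_below_step)); apply. Qed.

Lemma reaches_dominates k c c' :
  reaches c c' -> procs c k = Idle n Op Res -> dominates (ledger_sizes c) k c'.
Proof.
move=> reach idle; apply: (reaches_ind (dominates_step (k := k))) reach _.
by split=> //; rewrite idle.
Qed.

Lemma step_Invoke_enabled c i op :
  step c (Invoke i op) <> None -> procs c i = Idle n Op Res.
Proof. by rewrite /=; case: (procs c i). Qed.

Lemma step_RespApp_enabled c i :
  step c (@RespApp n Op i) <> None -> exists o ts r, procs c i = Appending o ts r true.
Proof. by rewrite /=; case: (procs c i) => // o ts r [] // _; exists o, ts, r. Qed.

Section Schedule.

Variables (ls : seq (label n Op)) (final : config).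
Hypothesis run : exec (init_config n Op Res) ls = Some final.

Definition config_at (t : nat) : option config :=
  exec (init_config n Op Res) (take t ls).

Lemma config_atP t : exists c, config_at t = Some c.
Proof.
move: run; rewrite -(cat_take_drop t ls) exec_cat /config_at.
by case: (exec _ (take t ls)) => // c _; exists c.
Qed.

Lemma config_at_reachable t c :
  config_at t = Some c -> reaches (init_config n Op Res) c.
Proof. by exists (take t ls). Qed.

Lemma config_at_reaches a b c c' :
  a <= b -> config_at a = Some c -> config_at b = Some c' -> reaches c c'.
Proof.
move=> le_ab at_a; rewrite /config_at -(subnKC le_ab) takeD exec_cat -/(config_at a) at_a.
by exists (take (b - a) (drop a ls)).
Qed.

Lemma config_at_enabled t c l :
  config_at t = Some c -> onth ls t = Some l -> step c l <> None.
Proof.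
move=> at_t ls_t; have [c' at_t1] := config_atP t.+1.
have lt_t : t < size ls by rewrite -onthTE ls_t.
move: at_t1; rewrite /config_at (take_nth l lt_t) (onth_nth l _ _ _ ls_t) -cats1 exec_cat.
by rewrite -/(config_at t) at_t /=; case: step.
Qed.

Lemma ts_at_appending t c i o ts r b :
  config_at t = Some c -> procs c i = Appending o ts r b ->
  ts_at valid execute ls i t = Some ts.
Proof. by rewrite /ts_at -/(config_at t) => -> ->. Qed.

End Schedule.

End Run.

Theorem mainTheorem2 (n : nat) (Op Res : Type)
  (valid : seq (seq (record n Op)) -> Op -> 'I_n -> bool)
  (execute : seq (seq (record n Op)) -> Op -> 'I_n -> Res)
  (ls : seq (label n Op)) :
  is_run valid execute ls ->
  forall (i k : 'I_n) (t1 t1' t2 t2' : nat),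
    acked ls i t1 t1' -> acked ls k t2 t2' ->
    t1' < t2 ->
    exists ts1 ts2 : tstamp n,
      [/\ ts_at valid execute ls i t1' = Some ts1,
          ts_at valid execute ls k t2' = Some ts2
        & ts_prec ts1 ts2].
Proof.
move=> [final run] i k t1 t1' t2 t2' [_ _ resp1 _] [lt_t2 [op2 inv2] resp2 _] lt_t12.
have [c1 at1] := config_atP run t1'.
have [c2 at2] := config_atP run t2.
have [c3 at3] := config_atP run t2'.
have [o1 [ts1 [r1 proc1]]] := step_RespApp_enabled (config_at_enabled run at1 resp1).
have idle2 := step_Invoke_enabled (config_at_enabled run at2 inv2).
have [o3 [ts2 [r3 proc3]]] := step_RespApp_enabled (config_at_enabled run at3 resp2).
exists ts1, ts2; split; [exact: ts_at_appending at1 proc1 | exact: ts_at_appending at3 proc3|].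
have /(_ i) := reachable_timestamps_below (config_at_reachable at1).
rewrite proc1 => -[ts1_i lt_ts1]; rewrite /ts_prec ts1_i.
have [_] := reaches_dominates (config_at_reaches (ltnW lt_t2) at2 at3) idle2.
rewrite proc3 => /(_ i (ltn_ord i)); apply: leq_trans.
rewrite -addn1; apply: leq_trans lt_ts1 _.
exact: reaches_ledger_size (config_at_reaches (ltnW lt_t12) at1 at2).
Qed.
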